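(* Let $R=\mathbb{F}_q+v\mathbb{F}_q+v^2\mathbb{F}_q$ with $v^3=v$. If $C$ is a formally self-dual code of length $n$ over $R$, then its Gray image $\Psi(C)\subseteq\mathbb{F}_q^{3n}$ is a formally self-dual code over $\mathbb{F}_q$.
   Context: $q$ is a prime power and $R=\mathbb{F}_q[v]/\langle v^3-v\rangle$. A linear code of length $n$ over $R$ is an $R$-submodule of $R^n$; $C^\perp=\{x\in R^n:\sum x_iy_i=0\ \forall y\in C\}$. For $c\in R^n$ written uniquely as $a_0+va_1+v^2a_2$ with $a_i\in\mathbb{F}_q^n$, the Gray map is $\Psi(c)=(a_0,a_0+a_2,a_1)\in\mathbb{F}_q^{3n}$, and the Lee weight $w_L(c)$ is the Hamming weight of $\Psi(c)$. A code $C$ over $R$ is formally self-dual if $C$ and $C^\perp$ have the same Lee weight enumerator $\sum_c X^{3n-w_L(c)}Y^{w_L(c)}$; a linear code $D\subseteq\mathbb{F}_q^{3n}$ is formally self-dual if $D$ and its dual (standard inner product) have the same Hamming weight enumerator. *)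

From HB Require Import structures.
From mathcomp Require Import all_boot all_order all_algebra.
Set Implicit Arguments. Unset Strict Implicit. Unset Printing Implicit Defensive.
Import GRing.Theory.
Local Open Scope ring_scope.

(* The ring R = F[v]/<v^3 - v>: an element a0 + v a1 + v^2 a2 is the triple
   ((a0, a1), a2).  F is an arbitrary finite field (= F_q, q a prime power). *)
Definition Rel (F : finFieldType) := (F * F * F)%type.

Definition R0 (F : finFieldType) : Rel F := (0, 0, 0).

Definition Radd (F : finFieldType) (a b : Rel F) : Rel F :=
  (a.1.1 + b.1.1, a.1.2 + b.1.2, a.2 + b.2).

(* product using v^3 = v, v^4 = v^2 *)
Definition Rmul (F : finFieldType) (a b : Rel F) : Rel F :=
  let: (a0, a1, a2) := a in let: (b0, b1, b2) := b in
  (a0 * b0,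
   a0 * b1 + a1 * b0 + a1 * b2 + a2 * b1,
   a0 * b2 + a2 * b0 + a1 * b1 + a2 * b2).

(* R^n, a vector c = a0 + v a1 + v^2 a2 with a_i in F^n, stored as ((a0, a1), a2) *)
Definition Rvec (F : finFieldType) (n : nat) :=
  ('rV[F]_n * 'rV[F]_n * 'rV[F]_n)%type.

Definition Rcoord (F : finFieldType) (n : nat) (c : Rvec F n) (i : 'I_n) : Rel F :=
  (c.1.1 0 i, c.1.2 0 i, c.2 0 i).

Definition Rvec_of (F : finFieldType) (n : nat) (f : 'I_n -> Rel F) : Rvec F n :=
  (\row_i (f i).1.1, \row_i (f i).1.2, \row_i (f i).2).

Definition Rvzero (F : finFieldType) (n : nat) : Rvec F n := (0, 0, 0).

Definition Rvadd (F : finFieldType) (n : nat) (c d : Rvec F n) : Rvec F n :=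
  Rvec_of (fun i => Radd (Rcoord c i) (Rcoord d i)).

Definition Rscale (F : finFieldType) (n : nat) (r : Rel F) (c : Rvec F n) : Rvec F n :=
  Rvec_of (fun i => Rmul r (Rcoord c i)).

Definition Rlinear_code (F : finFieldType) (n : nat) (C : {set Rvec F n}) : Prop :=
  [/\ Rvzero F n \in C,
      (forall c d, c \in C -> d \in C -> Rvadd c d \in C) &
      (forall (r : Rel F) c, c \in C -> Rscale r c \in C)].

Definition Rdot (F : finFieldType) (n : nat) (x y : Rvec F n) : Rel F :=
  \big[@Radd F/R0 F]_(i < n) Rmul (Rcoord x i) (Rcoord y i).

Definition Rdual (F : finFieldType) (n : nat) (C : {set Rvec F n}) : {set Rvec F n} :=
  [set x | [forall y in C, Rdot x y == R0 F]].

Definition gray (F : finFieldType) (n : nat) (c : Rvec F n) : 'rV[F]_(n + n + n) :=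
  row_mx (row_mx c.1.1 (c.1.1 + c.2)) c.1.2.

Definition gray_image (F : finFieldType) (n : nat) (C : {set Rvec F n})
  : {set 'rV[F]_(n + n + n)} := [set gray c | c in C].

Definition hweight (F : finFieldType) (N : nat) (x : 'rV[F]_N) : nat :=
  #|[set i : 'I_N | x 0 i != 0]|.

Definition lee_weight (F : finFieldType) (n : nat) (c : Rvec F n) : nat :=
  hweight (gray c).

(* weight enumerator  sum_{c in A} X^(N - w c) Y^(w c)  as an element of
   Z[X][Y] = {poly {poly int}} (inner variable X, outer variable Y) *)
Definition wenum (T : finType) (N : nat) (A : {set T}) (w : T -> nat)
  : {poly {poly int}} :=
  \sum_(c in A) ('X^(N - w c))%:P * 'X^(w c).

Definition R_formally_self_dual (F : finFieldType) (n : nat) (C : {set Rvec F n}) : Prop :=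
  wenum (n + n + n) C (@lee_weight F n) = wenum (n + n + n) (Rdual C) (@lee_weight F n).

Definition F_linear_code (F : finFieldType) (N : nat) (D : {set 'rV[F]_N}) : Prop :=
  [/\ 0 \in D,
      (forall x y, x \in D -> y \in D -> x + y \in D) &
      (forall (a : F) x, x \in D -> a *: x \in D)].

Definition Fdual (F : finFieldType) (N : nat) (D : {set 'rV[F]_N}) : {set 'rV[F]_N} :=
  [set x : 'rV[F]_N | [forall y in D, \sum_(i < N) x 0 i * (y : 'rV[F]_N) 0 i == 0]].

Definition F_formally_self_dual (F : finFieldType) (N : nat) (D : {set 'rV[F]_N}) : Prop :=
  wenum N D (@hweight F N) = wenum N (Fdual D) (@hweight F N).

(* The Gray map is an F-linear bijection R^n -> F^(3n) carrying the Lee weight to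
   the Hamming weight, so it suffices that it maps the dual of C onto the dual of
   its image.  Writing (s0, s1, s2) for the components of the R-inner product
   x . y, the F-inner product of the images of x and of y, v y, v^2 y is
   2 s0 + s2, s1 and s0 + s2 respectively.  Since C is closed under multiplication
   by v and v^2, the image of x is orthogonal to the image of C exactly when
   s0 = s1 = s2 = 0 for every y in C. *)

From mathcomp Require Import all_boot all_order all_algebra.
From mathcomp Require Import ring.
Set Implicit Arguments. Unset Strict Implicit. Unset Printing Implicit Defensive.
Import GRing.Theory.
Local Open Scope ring_scope.

Section RsumComponents.
Variable F : finFieldType.

Lemma Rsum_components (I : Type) (r : seq I) (P : pred I) (f : I -> Rel F) :
  \big[@Radd F/R0 F]_(i <- r | P i) f i =
  (\sum_(i <- r | P i) (f i).1.1, \sum_(i <- r | P i) (f i).1.2,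
   \sum_(i <- r | P i) (f i).2).
Proof.
elim: r => [|i r IH]; first by rewrite !big_nil.
by rewrite !big_cons; case: (P i); rewrite IH.
Qed.

End RsumComponents.

Section GrayMap.
Variables (F : finFieldType) (n : nat).
Implicit Types (x y c d : Rvec F n) (C : {set Rvec F n}).

Definition gray_inv (z : 'rV[F]_(n + n + n)) : Rvec F n :=
  (lsubmx (lsubmx z), rsubmx z, rsubmx (lsubmx z) - lsubmx (lsubmx z)).

Lemma grayK : cancel (@gray F n) gray_inv.
Proof.
case=> [[a0 a1] a2]; rewrite /gray_inv /gray /=.
rewrite (@row_mxKl _ 1 (n + n) n) (@row_mxKr _ 1 (n + n) n) row_mxKl row_mxKr.
by rewrite addrC addKr.
Qed.

Lemma gray_invK : cancel gray_inv (@gray F n).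
Proof. by move=> z; rewrite /gray_inv /gray /= addrC subrK !hsubmxK. Qed.

Lemma gray_inj : injective (@gray F n).
Proof. exact: can_inj grayK. Qed.

Lemma mem_gray_image C x : (gray x \in gray_image C) = (x \in C).
Proof. exact: mem_imset gray_inj. Qed.

Lemma gray0 : gray (Rvzero F n) = 0.
Proof. by rewrite /gray /= addr0 !row_mx0. Qed.

Lemma gray_add c d : gray (Rvadd c d) = gray c + gray d.
Proof.
have -> : Rvadd c d = (c.1.1 + d.1.1, c.1.2 + d.1.2, c.2 + d.2).
  by congr (_, _, _); apply/matrixP => i j; rewrite !mxE (ord1 i).
by rewrite /gray /= !add_row_mx addrACA.
Qed.

Lemma gray_scale (a : F) c : gray (Rscale (a, 0, 0) c) = a *: gray c.
Proof.
have -> : Rscale (a, 0, 0) c = (a *: c.1.1, a *: c.1.2, a *: c.2).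
  by congr (_, _, _); apply/matrixP => i j; rewrite !mxE /Rcoord /= (ord1 i); ring.
by rewrite /gray /= !scale_row_mx scalerDr.
Qed.

Lemma gray_image_linear C : Rlinear_code C -> F_linear_code (gray_image C).
Proof.
case=> C0 CD CZ; split.
- by rewrite -gray0 mem_gray_image.
- by move=> _ _ /imsetP[c cC ->] /imsetP[d dC ->]; rewrite -gray_add mem_gray_image CD.
- by move=> a _ /imsetP[c cC ->]; rewrite -gray_scale mem_gray_image CZ.
Qed.

Lemma wenum_gray_image C :
  wenum (n + n + n) (gray_image C) (@hweight F _) =
  wenum (n + n + n) C (@lee_weight F n).
Proof. by rewrite /wenum big_imset //; move=> ? ? _ _ /gray_inj. Qed.

Definition Fdot (z w : 'rV[F]_(n + n + n)) := \sum_(i < n + n + n) z 0 i * w 0 i.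

Lemma Fdot_gray x y : Fdot (gray x) (gray y) =
  \sum_i (x.1.1 0 i * y.1.1 0 i + (x.1.1 0 i + x.2 0 i) * (y.1.1 0 i + y.2 0 i)
          + x.1.2 0 i * y.1.2 0 i).
Proof.
rewrite /Fdot /gray !big_split_ord /= -!big_split /=.
by apply: eq_bigr => i _; rewrite !row_mxEl !row_mxEr !mxE.
Qed.

Lemma Rdot_components x y : Rdot x y =
  (\sum_i (Rmul (Rcoord x i) (Rcoord y i)).1.1,
   \sum_i (Rmul (Rcoord x i) (Rcoord y i)).1.2,
   \sum_i (Rmul (Rcoord x i) (Rcoord y i)).2).
Proof. exact: Rsum_components. Qed.

Lemma Rdot_eq0 x y :
  (Rdot x y == R0 F) = [&& (Rdot x y).1.1 == 0, (Rdot x y).1.2 == 0 & (Rdot x y).2 == 0].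
Proof. by case: (Rdot x y) => [[s0 s1] s2]; rewrite /R0 !xpair_eqE andbA. Qed.

Lemma Fdot_gray_Rdot x y :
  Fdot (gray x) (gray y) = (Rdot x y).1.1 *+ 2 + (Rdot x y).2.
Proof.
rewrite Fdot_gray Rdot_components /= -sumrMnl -big_split /=.
by apply: eq_bigr => i _; rewrite /Rcoord /=; ring.
Qed.

Lemma Fdot_gray_scale_v x y :
  Fdot (gray x) (gray (Rscale (0, 1, 0) y)) = (Rdot x y).1.2.
Proof.
rewrite Fdot_gray Rdot_components /=; apply: eq_bigr => i _.
by rewrite !mxE /Rcoord /=; ring.
Qed.

Lemma Fdot_gray_scale_v2 x y :
  Fdot (gray x) (gray (Rscale (0, 0, 1) y)) = (Rdot x y).1.1 + (Rdot x y).2.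
Proof.
rewrite Fdot_gray Rdot_components /= -big_split /=; apply: eq_bigr => i _.
by rewrite !mxE /Rcoord /=; ring.
Qed.

Lemma Fdual_gray_image C :
  (forall (r : Rel F) c, c \in C -> Rscale r c \in C) ->
  Fdual (gray_image C) = gray_image (Rdual C).
Proof.
move=> CZ; apply/setP => z; rewrite -(gray_invK z); set x := gray_inv z.
rewrite mem_gray_image !inE.
apply/forallP/forallP => /= orth y; apply/implyP => yC.
- have orth_gray d : d \in C -> Fdot (gray x) (gray d) = 0.
    by move=> dC; apply/eqP; have := orth (gray d); rewrite mem_gray_image dC.
  have s1 := orth_gray _ (CZ (0, 1, 0) _ yC).
  have s02 := orth_gray _ (CZ (0, 0, 1) _ yC).
  have s002 := orth_gray _ yC.
  rewrite Fdot_gray_scale_v in s1; rewrite Fdot_gray_scale_v2 in s02.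
  rewrite Fdot_gray_Rdot mulr2n -addrA s02 addr0 in s002.
  by rewrite Rdot_eq0 s1 s002 -s02 s002 add0r !eqxx.
- case/imsetP: yC => {}y yC ->; move/implyP/(_ yC): (orth y).
  rewrite Rdot_eq0 => /and3P[/eqP s0 _ /eqP s2].
  by rewrite -[X in X == 0]/(Fdot _ _) Fdot_gray_Rdot s0 s2 mul0rn addr0.
Qed.

End GrayMap.

Theorem theorem19 (F : finFieldType) (n : nat) (C : {set Rvec F n}) :
  Rlinear_code C -> R_formally_self_dual C ->
  F_linear_code (gray_image C) /\ F_formally_self_dual (gray_image C).
Proof.
move=> lin_C fsd_C; split; first exact: gray_image_linear.
have [_ _ CZ] := lin_C.
by rewrite /F_formally_self_dual Fdual_gray_image // !wenum_gray_image.
Qed.
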